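(* Let $k\geqslant 2$ be an integer and $\beta_k=\delta_3^{3k+1}\sigma_4^{2k+2}\sigma_3\sigma_4^{2k-1}\in B_5$, where $\delta_3=\sigma_2\sigma_1$. Then $\beta_k$ belongs to its own super summit set.
   Context: $B_5$ is the 5-strand braid group with standard generators $\sigma_1,\dots,\sigma_4$, positive monoid $B_5^+$, Garside element $\Delta=(\sigma_1\sigma_2\sigma_3\sigma_4)(\sigma_1\sigma_2\sigma_3)(\sigma_1\sigma_2)\sigma_1$. Simple braids are those $x$ with $x\in B_5^+$ and $x^{-1}\Delta\in B_5^+$; simple $s_1,s_2$ are left-weighted if no $\sigma_i$ makes both $s_1\sigma_i$ and $\sigma_i^{-1}s_2$ simple. Each $x$ has a unique left normal form $\Delta^px_1\cdots x_r$ (simple $x_i\neq1,\Delta$, consecutive ones left-weighted); $r$ is its canonical length. The super summit set of $x$ is the set of conjugates of $x$ of minimal canonical length. *)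

(* The braid group B_5 is modelled by its standard
   presentation: words in the letters sigma_i^{+1}, sigma_i^{-1}
   (i = 1..4, stored as i-1 : 'I_4), modulo the congruence generated by
   free cancellation and the braid relations. *)
From mathcomp Require Import all_boot all_algebra.
Set Implicit Arguments. Unset Strict Implicit. Unset Printing Implicit Defensive.

(* a letter (i, true) is sigma_{i+1}, (i, false) is sigma_{i+1}^{-1} *)
Definition letter := ('I_4 * bool)%type.
Definition word := seq letter.

Inductive braid_rel : word -> word -> Prop :=
  | rel_cancel (i : 'I_4) (b : bool) : braid_rel [:: (i, b); (i, ~~ b)] [::]
  | rel_far (i j : 'I_4) : (i.+2 <= j)%N ->
      braid_rel [:: (i, true); (j, true)] [:: (j, true); (i, true)]
  | rel_near (i j : 'I_4) : (j = i.+1 :> nat) ->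
      braid_rel [:: (i, true); (j, true); (i, true)]
                [:: (j, true); (i, true); (j, true)].

Inductive beq : word -> word -> Prop :=
  | beq_step (u v s t : word) : braid_rel s t -> beq (u ++ s ++ v) (u ++ t ++ v)
  | beq_refl (w : word) : beq w w
  | beq_sym (w1 w2 : word) : beq w1 w2 -> beq w2 w1
  | beq_trans (w1 w2 w3 : word) : beq w1 w2 -> beq w2 w3 -> beq w1 w3.

Definition winv (w : word) : word := rev (map (fun l => (l.1, ~~ l.2)) w).

Definition sigma (i : nat) : word := [:: (inord i.-1 : 'I_4, true)].

Definition wpow (w : word) (n : nat) : word := flatten (nseq n w).

Definition Delta : word :=
  sigma 1 ++ sigma 2 ++ sigma 3 ++ sigma 4 ++
  sigma 1 ++ sigma 2 ++ sigma 3 ++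
  sigma 1 ++ sigma 2 ++ sigma 1.

Definition Delta_pow (p : int) : word :=
  match p with
  | Posz n => wpow Delta n
  | Negz n => wpow (winv Delta) n.+1
  end.

Definition positive (x : word) : Prop :=
  exists u : word, all (fun l : letter => l.2) u /\ beq x u.

Definition simple (x : word) : Prop := positive x /\ positive (winv x ++ Delta).

Definition left_weighted (s1 s2 : word) : Prop :=
  ~ exists i : 'I_4, simple (s1 ++ [:: (i, true)]) /\ simple ([:: (i, false)] ++ s2).

Definition left_normal_form (x : word) (p : int) (xs : seq word) : Prop :=
  [/\ beq x (Delta_pow p ++ flatten xs),
      forall s, s \in xs -> [/\ simple s, ~ beq s [::] & ~ beq s Delta]
    & forall i, (i.+1 < size xs)%N -> left_weighted (nth [::] xs i) (nth [::] xs i.+1)].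

Definition canonical_length (x : word) (r : nat) : Prop :=
  exists p xs, left_normal_form x p xs /\ size xs = r.

Definition conjugate (x y : word) : Prop :=
  exists c : word, beq y (winv c ++ x ++ c).

Definition in_super_summit_set (y x : word) : Prop :=
  conjugate x y /\
  exists r, canonical_length y r /\
    forall z r', conjugate x z -> canonical_length z r' -> (r <= r')%N.

Definition delta3 : word := sigma 2 ++ sigma 1.

Definition beta (k : nat) : word :=
  wpow delta3 (3 * k + 1) ++ wpow (sigma 4) (2 * k + 2) ++ sigma 3 ++
  wpow (sigma 4) (2 * k - 1).

(* For k = m + 2, beta_k equals a^(2k) b c d^(2k-3) in B_5, where a = s1 s2 s1 s4,
   b = s2 s1 s3 s4 s3, c = s3 s4 and d = s4.  These braids are simple (each is a prefix of a
   positive word for Delta) and consecutive factors are left-weighted, so beta_k has infimum 0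
   and canonical length 4k - 1.

   Minimality is read off the Lawrence-Krammer representation, with each inverse generator
   scaled by q^2 t so that all matrices have entries in Z[t].  At q = 2 and modulo (8, t),
   Delta acts by 0 while the trace of beta_k does not vanish; since the trace is a conjugacy
   invariant, no conjugate of beta_k has positive infimum.  At q = -1 the inverse of a simple
   braid of length l acts by a matrix divisible by t^(l-1), whereas the trace of beta_k^-1 is
   t^(6k+5) times a polynomial with constant term 2, against the scaling t^(10k+4).  Comparing
   t-adic valuations of the traces for a conjugate Delta^p x_1 ... x_r with p <= 0 forces
   r >= 4k - 1. *)

From mathcomp Require Import all_boot all_algebra.
From mathcomp.zify Require Import ssrZ.
From Stdlib Require Import ZArith.
From mathcomp Require Import zify.
Set Implicit Arguments. Unset Strict Implicit. Unset Printing Implicit Defensive.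
Import GRing.Theory.

(* ZArith rebinds the %N delimiter to BinNat; restore the MathComp convention. *)
Delimit Scope nat_scope with N.

(** * Braid words *)

Lemma beq_cong u v a b : beq a b -> beq (u ++ a ++ v) (u ++ b ++ v).
Proof.
elim=> {a b} [u' v' s t hr|w|w1 w2 _ IH|w1 w2 w3 _ IH1 _ IH2].
- have E x : u ++ (u' ++ x ++ v') ++ v = (u ++ u') ++ x ++ (v' ++ v) by rewrite !catA.
  by rewrite !E; apply: beq_step.
- exact: beq_refl.
- exact: beq_sym.
- exact: beq_trans IH2.
Qed.

Lemma beq_catl u a b : beq a b -> beq (u ++ a) (u ++ b).
Proof. by move=> h; have := beq_cong u [::] h; rewrite !cats0. Qed.

Lemma beq_catr v a b : beq a b -> beq (a ++ v) (b ++ v).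
Proof. exact: beq_cong [::] v a b. Qed.

Lemma beq_cat a a' b b' : beq a a' -> beq b b' -> beq (a ++ b) (a' ++ b').
Proof. by move=> h1 h2; apply: beq_trans (beq_catr _ h1) (beq_catl _ h2). Qed.

Lemma winv_cat u v : winv (u ++ v) = winv v ++ winv u.
Proof. by rewrite /winv map_cat rev_cat. Qed.

Lemma winvK : involutive winv.
Proof.
move=> w; rewrite /winv map_rev revK -map_comp -[RHS]map_id.
by apply: eq_map => -[i b] /=; rewrite negbK.
Qed.

Lemma beq_cat_winv w : beq (w ++ winv w) [::].
Proof.
elim: w => [|[i b] w IH]; first exact: beq_refl.
rewrite -cat1s winv_cat -catA (catA w).
apply: beq_trans (beq_cong [:: (i, b)] (winv [:: (i, b)]) IH) _.
exact: (beq_step [::] [::] (rel_cancel i b)).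
Qed.

Lemma beq_winv_cat w : beq (winv w ++ w) [::].
Proof. by have := beq_cat_winv (winv w); rewrite winvK. Qed.

Lemma beq_winv s t : beq s t -> beq (winv s) (winv t).
Proof.
move=> h; apply: (@beq_trans _ (winv s ++ t ++ winv t)).
  by have := beq_catl (winv s) (beq_sym (beq_cat_winv t)); rewrite cats0.
rewrite catA; apply: (@beq_trans _ ([::] ++ winv t)); last exact: beq_refl.
apply: beq_catr; apply: beq_trans (beq_winv_cat s).
exact: beq_catl (beq_sym h).
Qed.

Lemma wpowS w n : wpow w n.+1 = w ++ wpow w n.
Proof. by []. Qed.

Lemma wpowD w m n : wpow w (m + n) = wpow w m ++ wpow w n.
Proof. by elim: m => [|m IH] //=; rewrite addSn wpowS IH catA. Qed.

Lemma wpowSr w n : wpow w n.+1 = wpow w n ++ w.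
Proof. by rewrite -addn1 wpowD /wpow /= cats0. Qed.

Lemma wpowM w m n : wpow w (m * n) = wpow (wpow w m) n.
Proof. by elim: n => [|n IH]; rewrite ?muln0 // mulnS wpowD IH. Qed.

Lemma winv_wpow w n : winv (wpow w n) = wpow (winv w) n.
Proof. by elim: n => [|n IH] //; rewrite wpowS winv_cat IH -wpowSr. Qed.

Lemma all_wpow (P : pred letter) w n : all P w -> all P (wpow w n).
Proof. by move=> h; elim: n => [|n IH] //; rewrite wpowS all_cat h IH. Qed.

Lemma count_all_snd (w : word) : all snd w -> count snd w = size w.
Proof. by rewrite all_count => /eqP. Qed.

Lemma beq_wpow x y n : beq x y -> beq (wpow x n) (wpow y n).
Proof. by move=> h; elim: n => [|n IH]; [exact: beq_refl | apply: beq_cat]. Qed.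

Lemma beq_wpow_commute x y n :
  beq (x ++ y) (y ++ x) -> beq (wpow x n ++ y) (y ++ wpow x n).
Proof.
move=> h; elim: n => [|n IH] /=; first by rewrite cats0; exact: beq_refl.
rewrite -catA; apply: beq_trans (beq_catl x IH) _.
by rewrite !catA; apply: beq_catr.
Qed.

Lemma beq_wpow_cat x y n :
  beq (x ++ y) (y ++ x) -> beq (wpow x n ++ wpow y n) (wpow (x ++ y) n).
Proof.
move=> h; elim: n => [|n IH]; first exact: beq_refl.
rewrite !wpowS -!catA; apply: beq_catl.
rewrite catA; apply: beq_trans (beq_catr _ (beq_wpow_commute n h)) _.
by rewrite -catA; apply: beq_catl.
Qed.

Lemma size_wpow w n : size (wpow w n) = (size w * n)%N.
Proof. by rewrite /wpow size_flatten /shape map_nseq sumn_nseq mulnC. Qed.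

Definition ninv (w : word) : nat := count (predC snd) w.

Lemma ninv_cat u v : ninv (u ++ v) = (ninv u + ninv v)%N.
Proof. exact: count_cat. Qed.

Lemma ninv_winv w : ninv (winv w) = count snd w.
Proof. by rewrite /ninv count_rev count_map; apply: eq_count => -[i b] /=; rewrite negbK. Qed.

Lemma ninv_winv_add w : (ninv (winv w) + ninv w)%N = size w.
Proof. by rewrite ninv_winv /ninv count_predC. Qed.

Lemma ninv_all_snd w : all snd w -> ninv w = 0%N.
Proof. by move=> pos_w; apply/eqP; rewrite -leqn0 leqNgt -has_count has_predC pos_w. Qed.

Definition exponent_sum (w : word) : int :=
  (Posz (count snd w) - Posz (count (predC snd) w))%R.

Lemma exponent_sum_cat u v : exponent_sum (u ++ v) = (exponent_sum u + exponent_sum v)%R.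
Proof. rewrite /exponent_sum !count_cat !PoszD; lia. Qed.

Lemma beq_exponent_sum w1 w2 : beq w1 w2 -> exponent_sum w1 = exponent_sum w2.
Proof.
elim=> {w1 w2} [u v a b hr|//|w1 w2 _ ->//|w1 w2 w3 _ -> _ ->//].
rewrite !exponent_sum_cat; congr (_ + (_ + _))%R.
by case: hr => [i []|i j _|i j _]; rewrite /exponent_sum.
Qed.

Lemma beq_all_snd_size u v : all snd u -> all snd v -> beq u v -> size u = size v.
Proof.
have es_pos w : all snd w -> exponent_sum w = Posz (size w).
  rewrite all_count /exponent_sum => /eqP; have := count_predC snd w; lia.
by move=> pos_u pos_v /beq_exponent_sum; rewrite !es_pos // => -[].
Qed.

Lemma positive_cat u v : positive u -> positive v -> positive (u ++ v).
Proof.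
move=> [u' [pos_u eq_u]] [v' [pos_v eq_v]].
by exists (u' ++ v'); rewrite all_cat pos_u pos_v; split=> //; exact: beq_cat.
Qed.

Lemma positive_flatten xs : {in xs, forall s, positive s} -> positive (flatten xs).
Proof.
elim: xs => [|s xs IH] pos_xs /=; first by exists [::]; split=> //; exact: beq_refl.
apply: positive_cat; first by apply: pos_xs; rewrite mem_head.
by apply: IH => t t_xs; apply: pos_xs; rewrite inE t_xs orbT.
Qed.

(** * Positive braid moves *)

(* The positive word of a list of 0-based generator indices: i stands for sigma_(i+1). *)
Definition pword (s : seq nat) : word := [seq (inord i, true) | i <- s].

Lemma pword_cat s t : pword (s ++ t) = pword s ++ pword t.
Proof. exact: map_cat. Qed.

Lemma all_snd_pword s : all snd (pword s).
Proof. by rewrite all_map; apply/allP. Qed.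

Definition far (i j : nat) : bool := (i.+2 <= j) || (j.+2 <= i).

Definition adjacent (i j : nat) : bool := (j == i.+1) || (i == j.+1).

Fixpoint positive_moves (s : seq nat) : seq (seq nat) :=
  if s is a :: s' then
    match s' with
    | b :: c :: r => if adjacent a b && (c == a) then [:: [:: b, a, b & r]] else [::]
    | _ => [::] end ++
    match s' with
    | b :: r => if far a b then [:: [:: b, a & r]] else [::]
    | _ => [::] end ++
    map (cons a) (positive_moves s')
  else [::].

Lemma beq_pword_far i j r : i < 4 -> j < 4 -> far i j ->
  beq (pword [:: i, j & r]) (pword [:: j, i & r]).
Proof.
move=> hi hj /orP[] hij.
  by apply: (beq_step [::] (pword r) (rel_far _)); rewrite !inordK.
by apply/beq_sym/(beq_step [::] (pword r) (rel_far _)); rewrite !inordK.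
Qed.

Lemma beq_pword_adjacent i j r : i < 4 -> j < 4 -> adjacent i j ->
  beq (pword [:: i, j, i & r]) (pword [:: j, i, j & r]).
Proof.
move=> hi hj /orP[] /eqP hij.
  by apply: (beq_step [::] (pword r) (rel_near _)); rewrite !inordK.
by apply/beq_sym/(beq_step [::] (pword r) (rel_near _)); rewrite !inordK.
Qed.

Lemma positive_movesP s s' : all (fun i => i < 4) s -> s' \in positive_moves s ->
  beq (pword s) (pword s') /\ all (fun i => i < 4) s'.
Proof.
elim: s s' => [|a s IH] s' //= /andP[ha hs]; rewrite !mem_cat.
case/or3P=> [|| /mapP[v hv ->]].
- case: s IH hs => [|b [|c r]] //= _ /and3P[hb _ hr].
  case: ifP => // /andP[hab /eqP ->]; rewrite inE => /eqP ->.
  by split; [exact: beq_pword_adjacent | rewrite /= ha hb hr].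
- case: s IH hs => [|b r] //= _ /andP[hb hr].
  case: ifP => // hab; rewrite inE => /eqP ->.
  by split; [exact: beq_pword_far | rewrite /= ha hb hr].
- have [hbeq hv4] := IH v hs hv.
  by split; [exact: (beq_catl [:: (inord a, true)] hbeq) | rewrite /= ha].
Qed.

Fixpoint explore (n : nat) (seen frontier : seq (seq nat)) : seq (seq nat) :=
  if n is n'.+1 then
    let new := undup [seq v <- flatten (map positive_moves frontier) | v \notin seen] in
    explore n' (seen ++ new) new
  else seen.

Lemma beq_explore n s s' : all (fun i => i < 4) s -> s' \in explore n [:: s] [:: s] ->
  beq (pword s) (pword s').
Proof.
move=> hs; pose good v := beq (pword s) (pword v) /\ all (fun i => i < 4) v.
suff explore_good : forall seen fr, {in seen, forall v, good v} -> {subset fr <= seen} ->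
    {in explore n seen fr, forall v, good v}.
  have start : {in [:: s], forall v, good v}.
    by move=> v; rewrite inE => /eqP ->; split=> //; exact: beq_refl.
  by move=> /(explore_good _ _ start (fun v h => h))[].
elim: n => [|n IH] seen fr hseen hfr //=; apply: IH => v; rewrite ?mem_cat; last first.
  by move=> hv; rewrite hv orbT.
case/orP=> [/hseen //|]; rewrite mem_undup mem_filter => /andP[_].
case/flattenP=> _ /mapP[u /hfr hu ->] hv.
have [hsu hu4] := hseen u hu; have [huv hv4] := positive_movesP hu4 hv.
by split=> //; exact: beq_trans huv.
Qed.

Definition Delta_code : seq nat := [:: 0; 1; 2; 3; 0; 1; 2; 0; 1; 0].

Lemma pword_positive s : positive (pword s).
Proof. by exists (pword s); split; [exact: all_snd_pword | exact: beq_refl]. Qed.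

Lemma simple_pword n s :
  has (prefix s) (explore n [:: Delta_code] [:: Delta_code]) -> simple (pword s).
Proof.
case/hasP=> w /(@beq_explore _ Delta_code _ isT) hb /prefixP[v hw].
split; first exact: pword_positive.
exists (pword v); split; first exact: all_snd_pword.
rewrite hw pword_cat in hb; apply: beq_trans (beq_catl _ hb) _.
rewrite catA; apply: beq_trans (beq_catr _ (beq_winv_cat _)) (beq_refl _).
Qed.

(** * A factorisation of beta *)

Definition sigma121 : word := pword [:: 0; 1; 0].
Definition nf_a : word := pword [:: 0; 1; 0; 3].
Definition nf_b : word := pword [:: 1; 0; 2; 3; 2].
Definition nf_c : word := pword [:: 2; 3].
Definition nf_d : word := sigma 4.

Definition beta_factors (m : nat) : seq word :=
  nseq (2 * m + 4) nf_a ++ [:: nf_b; nf_c] ++ nseq (2 * m + 1) nf_d.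

Lemma beta_decomp m : beta m.+2 =
  wpow (wpow delta3 3) m.+2 ++ delta3 ++ wpow (sigma 4) (2 * m + 4) ++
  (wpow (sigma 4) 2 ++ sigma 3 ++ wpow (sigma 4) 2) ++ wpow (sigma 4) (2 * m + 1).
Proof.
rewrite /beta (wpowD delta3 (3 * m.+2) 1) wpowM.
rewrite (_ : 2 * m.+2 + 2 = (2 * m + 4) + 2); last by lia.
rewrite (_ : 2 * m.+2 - 1 = 2 + (2 * m + 1)); last by lia.
by rewrite (wpowD _ (2 * m + 4) 2) (wpowD _ 2 (2 * m + 1)) [wpow delta3 1]cats0 -!catA.
Qed.

Lemma flatten_beta_factors m :
  flatten (beta_factors m) = wpow nf_a (2 * m + 4) ++ nf_b ++ nf_c ++ wpow nf_d (2 * m + 1).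
Proof. by rewrite /beta_factors !flatten_cat /=. Qed.

Lemma beq_beta_factors m : beq (beta m.+2) (flatten (beta_factors m)).
Proof.
have delta3_cube : beq (wpow delta3 3) (wpow sigma121 2).
  by apply: (@beq_explore 1 [:: 1; 0; 1; 0; 1; 0] [:: 0; 1; 0; 0; 1; 0]); vm_compute.
have delta3_sigma4 : beq (sigma 4 ++ delta3) (delta3 ++ sigma 4).
  by apply: (@beq_explore 2 [:: 3; 1; 0] [:: 1; 0; 3]); vm_compute.
have sigma121_sigma4 : beq (sigma121 ++ sigma 4) (sigma 4 ++ sigma121).
  by apply: (@beq_explore 3 [:: 0; 1; 0; 3] [:: 3; 0; 1; 0]); vm_compute.
have middle : beq (delta3 ++ wpow (sigma 4) 2 ++ sigma 3 ++ wpow (sigma 4) 2) (nf_b ++ nf_c).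
  by apply: (@beq_explore 2 [:: 1; 0; 3; 3; 2; 3; 3] [:: 1; 0; 2; 3; 2; 2; 3]); vm_compute.
rewrite beta_decomp flatten_beta_factors.
have a_power : beq (wpow (wpow delta3 3) m.+2 ++ wpow (sigma 4) (2 * m + 4))
                   (wpow nf_a (2 * m + 4)).
  apply: beq_trans (beq_catr _ (beq_wpow m.+2 delta3_cube)) _.
  rewrite -wpowM (_ : 2 * m.+2 = 2 * m + 4); last by lia.
  exact: beq_wpow_cat sigma121_sigma4.
have commute : beq (delta3 ++ wpow (sigma 4) (2 * m + 4)) (wpow (sigma 4) (2 * m + 4) ++ delta3).
  exact/beq_sym/beq_wpow_commute.
set T := wpow (sigma 4) (2 * m + 1); set U := wpow (sigma 4) 2 ++ sigma 3 ++ wpow (sigma 4) 2.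
set X := wpow (wpow delta3 3) m.+2; set Y := wpow (sigma 4) (2 * m + 4).
apply: (@beq_trans _ (X ++ (Y ++ delta3) ++ U ++ T)).
  by apply: beq_catl; rewrite catA; apply: beq_catr.
have -> : X ++ (Y ++ delta3) ++ U ++ T = (X ++ Y) ++ (delta3 ++ U) ++ T by rewrite !catA.
by rewrite (catA nf_b); apply: beq_cat a_power (beq_catr _ middle).
Qed.

(** * Integer polynomial matrices *)

Local Open Scope ring_scope.

(* Elements of Z[X] and 10x10 matrices over Z[X] as coefficient lists, lowest degree first,
   so that products, equalities and divisibility by powers of X are decided by [vm_compute]. *)
Definition cpoly := seq Z.

Fixpoint cpoly_add (a b : cpoly) : cpoly :=
  match a, b with
  | [::], _ => b
  | _, [::] => a
  | x :: a', y :: b' => Z.add x y :: cpoly_add a' b'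
  end.

Fixpoint cpoly_mul (a b : cpoly) : cpoly :=
  if a is x :: a' then cpoly_add (map (Z.mul x) b) (Z0 :: cpoly_mul a' b) else [::].

Definition cpoly_eqb (a b : cpoly) : bool :=
  all (fun d => Z.eqb (nth Z0 a d) (nth Z0 b d)) (iota 0 (maxn (size a) (size b))).

Definition to_poly (a : cpoly) : {poly Z} := foldr (fun c p => c%:P + 'X * p) 0 a.

Lemma coef_to_poly a d : (to_poly a)`_d = nth Z0 a d.
Proof.
elim: a d => [|c a IH] [|d] /=; rewrite ?coef0 ?nth_nil //.
  by rewrite coefD coefC coefXM addr0.
by rewrite coefD coefC coefXM add0r IH.
Qed.

Lemma to_poly_add a b : to_poly (cpoly_add a b) = to_poly a + to_poly b.
Proof.
elim: a b => [|x a IH] [|y b] /=; rewrite ?add0r ?addr0 //.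
by rewrite IH (_ : Z.add x y = x + y) // polyCD mulrDr addrACA.
Qed.

Lemma to_poly_mul a b : to_poly (cpoly_mul a b) = to_poly a * to_poly b.
Proof.
have scale c : to_poly (map (Z.mul c) b) = c%:P * to_poly b.
  elim: b => [|y b IHb] /=; first by rewrite mulr0.
  by rewrite IHb (_ : Z.mul c y = c * y) // polyCM mulrDr mulrCA.
elim: a => [|x a IH] /=; first by rewrite mul0r.
by rewrite to_poly_add scale /= IH (_ : (Z0%:P : {poly Z}) = 0) // add0r mulrDl mulrA.
Qed.

Lemma cpoly_eqbP a b : cpoly_eqb a b -> to_poly a = to_poly b.
Proof.
move=> /allP eq_ab; apply/polyP => d; rewrite !coef_to_poly.
case: (ltnP d (maxn (size a) (size b))) => [hd|].
  by apply/Z.eqb_spec/eq_ab; rewrite mem_iota.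
by rewrite geq_max => /andP[ha hb]; rewrite !nth_default.
Qed.

Definition cmx := seq (seq cpoly).

Definition cmx_ent (M : cmx) (i j : nat) : cpoly := nth [::] (nth [::] M i) j.

Definition cmx_of (f : nat -> nat -> cpoly) : cmx := mkseq (fun i => mkseq (f i) 10) 10.

Lemma cmx_ent_of f (i j : 'I_10) : cmx_ent (cmx_of f) i j = f i j.
Proof. by rewrite /cmx_ent !nth_mkseq. Qed.

Definition to_mx (M : cmx) : 'M[{poly Z}]_10 := \matrix_(i, j) to_poly (cmx_ent M i j).

Lemma to_mx_of f : to_mx (cmx_of f) = \matrix_(i, j) to_poly (f i j).
Proof. by apply/matrixP => i j; rewrite !mxE cmx_ent_of. Qed.

Definition cmx_mul (A B : cmx) : cmx := cmx_of (fun i j =>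
  foldr cpoly_add [::] (mkseq (fun k => cpoly_mul (cmx_ent A i k) (cmx_ent B k j)) 10)).

Lemma to_poly_sum (f : nat -> cpoly) n :
  to_poly (foldr cpoly_add [::] (mkseq f n)) = \sum_(k < n) to_poly (f k).
Proof.
rewrite -(big_mkord xpredT (to_poly \o f)) /index_iota subn0 /mkseq.
by elim: (iota 0 n) => [|k s IH]; rewrite ?big_nil // big_cons /= to_poly_add IH.
Qed.

Lemma to_mx_mul A B : to_mx (cmx_mul A B) = to_mx A *m to_mx B.
Proof.
apply/matrixP => i j; rewrite to_mx_of !mxE to_poly_sum.
by apply: eq_bigr => k _; rewrite to_poly_mul !mxE.
Qed.

Definition cmx_forall (P : nat -> nat -> bool) : bool :=
  all (fun i => all (P i) (iota 0 10)) (iota 0 10).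

Lemma cmx_forallP (P : nat -> nat -> bool) :
  reflect (forall i j : 'I_10, P i j) (cmx_forall P).
Proof.
apply: (iffP allP) => [H i j | H i].
  have := H i; rewrite mem_iota ltn_ord => /(_ isT) /allP; apply.
  by rewrite mem_iota ltn_ord.
rewrite mem_iota add0n => hi; apply/allP => j; rewrite mem_iota add0n => hj.
exact: (H (Ordinal hi) (Ordinal hj)).
Qed.

Definition cmx_eqb (A B : cmx) : bool :=
  cmx_forall (fun i j => cpoly_eqb (cmx_ent A i j) (cmx_ent B i j)).

Lemma cmx_eqbP A B : cmx_eqb A B -> to_mx A = to_mx B.
Proof. by move/cmx_forallP=> eqAB; apply/matrixP => i j; rewrite !mxE; apply: cpoly_eqbP. Qed.

Definition cmx_scalar (a : cpoly) : cmx := cmx_of (fun i j => if i == j then a else [::]).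

Lemma to_mx_scalar a : to_mx (cmx_scalar a) = (to_poly a)%:M.
Proof.
apply/matrixP => i j; rewrite to_mx_of !mxE.
case: (eqVneq i j) => [<-|/negbTE neq_ij]; first by rewrite !eqxx.
by have -> : (i == j :> nat) = false by exact: neq_ij.
Qed.

Definition cmx_trace (M : cmx) : cpoly := foldr cpoly_add [::] (mkseq (fun i => cmx_ent M i i) 10).

Lemma trace_to_mx M : \tr (to_mx M) = to_poly (cmx_trace M).
Proof. by rewrite to_poly_sum; apply: eq_bigr => i _; rewrite mxE. Qed.

Definition Xdvdmx (d : nat) (A : 'M[{poly Z}]_10) : Prop := exists B, A = 'X^d *: B.

Lemma Xdvdmx_leq (m d : nat) A : (m <= d)%N -> Xdvdmx d A -> Xdvdmx m A.
Proof.
move=> le_md [B ->]; exists ('X^(d - m) *: B).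
by rewrite scalerA -exprD (subnKC le_md).
Qed.

Lemma Xdvdmx_mul (m d : nat) A B : Xdvdmx m A -> Xdvdmx d B -> Xdvdmx (m + d)%N (A *m B).
Proof.
move=> [A' ->] [B' ->]; exists (A' *m B').
by rewrite -scalemxAl -scalemxAr scalerA -exprD.
Qed.

Definition cmx_Xdvd (d : nat) (M : cmx) : bool :=
  cmx_forall (fun i j => all (fun k => Z.eqb (nth Z0 (cmx_ent M i j) k) Z0) (iota 0 d)).

Definition cmx_Xdiv (d : nat) (M : cmx) : cmx := cmx_of (fun i j => drop d (cmx_ent M i j)).

Lemma to_mx_Xdiv d M : cmx_Xdvd d M -> to_mx M = 'X^d *: to_mx (cmx_Xdiv d M).
Proof.
move/cmx_forallP=> low; apply/matrixP => i j; rewrite !mxE cmx_ent_of; apply/polyP => k.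
rewrite coefXnM !coef_to_poly nth_drop; case: ltnP => [hk|/subnKC -> //].
by apply/Z.eqb_spec/(allP (low i j)); rewrite mem_iota.
Qed.

Lemma cmx_XdvdP d M : reflect (Xdvdmx d (to_mx M)) (cmx_Xdvd d M).
Proof.
apply: (iffP idP) => [/to_mx_Xdiv eqM | [B eqMB]]; first by exists (to_mx (cmx_Xdiv d M)).
apply/cmx_forallP => i j; apply/allP => k; rewrite mem_iota add0n => /andP[_ hk].
have := congr1 (fun A : 'M[{poly Z}]_10 => (A i j)`_k) eqMB.
by rewrite /= !mxE coefXnM hk coef_to_poly => /Z.eqb_spec.
Qed.

Section ConstantTerm.

Variables (R : comNzRingType) (f : {rmorphism Z -> R}) (red : Z -> Z).
Hypothesis f_red : forall z, f (red z) = f z.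

Local Notation ev0 := (f \o horner_eval 0).

Definition cmx_red (M : cmx) : cmx := cmx_of (fun i j => [:: red (nth Z0 (cmx_ent M i j) 0)]).

Lemma map_to_mx_red M : map_mx ev0 (to_mx (cmx_red M)) = map_mx ev0 (to_mx M).
Proof.
apply/matrixP => i j; rewrite !mxE cmx_ent_of /= !horner_evalE !horner_coef0.
by rewrite mulr0 addr0 coefC f_red coef_to_poly.
Qed.

Lemma map_to_mx_eq A B :
  cmx_eqb (cmx_red A) (cmx_red B) -> map_mx ev0 (to_mx A) = map_mx ev0 (to_mx B).
Proof. by move/cmx_eqbP=> eqAB; rewrite -map_to_mx_red eqAB map_to_mx_red. Qed.

Fixpoint cmx_pow_red (A : cmx) (k : nat) : cmx :=
  if k is k'.+1 then cmx_red (cmx_mul (cmx_pow_red A k') A) else cmx_scalar [:: 1%Z].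

Lemma map_to_mx_pow A k : map_mx ev0 (to_mx (cmx_pow_red A k)) = map_mx ev0 (to_mx A) ^+ k.
Proof.
elim: k => [|k IH] /=.
  by rewrite to_mx_scalar /= mulr0 addr0 polyC1 rmorph1 expr0.
by rewrite map_to_mx_red to_mx_mul map_mxM IH exprSr.
Qed.

Lemma map_to_mx_pow_stable A m k :
  cmx_eqb (cmx_pow_red A m.+1) (cmx_pow_red A m) -> (m <= k)%N ->
  map_mx ev0 (to_mx A ^+ k) = map_mx ev0 (to_mx (cmx_pow_red A m)).
Proof.
move/cmx_eqbP/(congr1 (map_mx ev0)); rewrite rmorphXn map_to_mx_pow !map_to_mx_pow => stable.
elim: k => [|k IH]; first by rewrite leqn0 => /eqP ->.
rewrite leq_eqVlt => /orP[/eqP <- //|]; rewrite ltnS => /IH.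
by rewrite exprS => ->; rewrite -exprS.
Qed.

Lemma trace_map_to_mx M : \tr (map_mx ev0 (to_mx M)) = f (nth Z0 (cmx_trace M) 0).
Proof. by rewrite trace_map_mx /= trace_to_mx horner_evalE horner_coef0 coef_to_poly. Qed.

End ConstantTerm.

(** * Representations up to scaling *)

Definition letter_code (l : letter) : nat * bool := (val l.1, l.2).

Lemma code_pword s : all (fun i => i < 4)%N s ->
  map letter_code (pword s) = [seq (i, true) | i <- s].
Proof.
move=> /allP lt4; rewrite -map_comp; apply/eq_in_map => i /lt4 lt_i4.
by rewrite /letter_code /= inordK.
Qed.

Lemma code_winv w :
  map letter_code (winv w) = rev [seq (p.1, ~~ p.2) | p <- map letter_code w].
Proof. by rewrite /winv map_rev -!map_comp. Qed.

(* [rho (i, false)] stands for [s] times the inverse of [rho (i, true)], so that [rep] below is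
   multiplicative on words and well defined on braids up to powers of [s]. *)
Definition braid_relations (rho : nat * bool -> cmx) (s : cpoly) : bool :=
  [&& all (fun i => cmx_eqb (cmx_mul (rho (i, true)) (rho (i, false))) (cmx_scalar s) &&
                    cmx_eqb (cmx_mul (rho (i, false)) (rho (i, true))) (cmx_scalar s)) (iota 0 4),
      all (fun i => all (fun j => (i.+2 <= j)%N ==>
             cmx_eqb (cmx_mul (rho (i, true)) (rho (j, true)))
                     (cmx_mul (rho (j, true)) (rho (i, true)))) (iota 0 4)) (iota 0 4) &
      all (fun i => cmx_eqb (cmx_mul (cmx_mul (rho (i, true)) (rho (i.+1, true))) (rho (i, true)))
                    (cmx_mul (cmx_mul (rho (i.+1, true)) (rho (i, true))) (rho (i.+1, true))))
          (iota 0 3)].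

Section ScaledRepresentation.

Variables (rho : nat * bool -> cmx) (s : cpoly).
Hypothesis rho_braid : braid_relations rho s.
Hypothesis s_neq0 : to_poly s != 0.

Local Notation S := (to_poly s).

Definition rep (w : word) : 'M[{poly Z}]_10 :=
  foldr (fun l A => to_mx (rho (letter_code l)) *m A) 1%:M w.

Lemma rep_cat u v : rep (u ++ v) = rep u *m rep v.
Proof. by elim: u => [|l u IH] /=; rewrite ?mul1mx // IH mulmxA. Qed.

Lemma rep_wpow w n : rep (wpow w n) = rep w ^+ n.
Proof. by elim: n => [|n IH]; rewrite ?expr0 // wpowS rep_cat IH exprS. Qed.

Definition cmx_prod (c : seq (nat * bool)) : cmx :=
  foldr (fun p A => cmx_mul (rho p) A) (cmx_scalar [:: 1%Z]) c.

Lemma rep_code w : rep w = to_mx (cmx_prod (map letter_code w)).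
Proof.
elim: w => [|l w IH] /=; last by rewrite to_mx_mul IH.
by rewrite to_mx_scalar /= mulr0 addr0 polyC1.
Qed.

Lemma rep_braid_rel a b : braid_rel a b -> S ^+ ninv b *: rep a = S ^+ ninv a *: rep b.
Proof.
have lt4 (i : 'I_4) : val i \in iota 0 4 by rewrite mem_iota ltn_ord.
case/and3P: rho_braid => /allP inv_rel /allP far_rel /allP near_rel.
case=> [i [] | i j hij | i j hij]; rewrite /ninv /letter_code /= !expr0 ?expr1 !scale1r.
all: rewrite ?mulmx1 ?mulmxA -?to_mx_mul.
- by have /andP[/cmx_eqbP -> _] := inv_rel i (lt4 i); rewrite to_mx_scalar scalemx1.
- by have /andP[_ /cmx_eqbP ->] := inv_rel i (lt4 i); rewrite to_mx_scalar scalemx1.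
- have /allP/(_ j (lt4 j)) := far_rel i (lt4 i); by rewrite hij => /cmx_eqbP.
- have i_lt3 : val i \in iota 0 3 by rewrite mem_iota; have := ltn_ord j; rewrite hij.
  by have /cmx_eqbP := near_rel i i_lt3; rewrite -hij.
Qed.

Lemma rep_beq w1 w2 : beq w1 w2 -> S ^+ ninv w2 *: rep w1 = S ^+ ninv w1 *: rep w2.
Proof.
have scalerC x y (M : 'M[{poly Z}]_10) : x *: (y *: M) = y *: (x *: M).
  by rewrite !scalerA mulrC.
elim=> {w1 w2} [u v a b /rep_braid_rel rel_ab| // | w1 w2 _ -> // |w1 w2 w3 _ eq12 _ eq23].
  have pull c n (A B C : 'M[{poly Z}]_10) :
      c *: (A *m ((S ^+ n *: B) *m C)) = (c * S ^+ n) *: (A *m (B *m C)).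
    by rewrite -scalemxAl -scalemxAr scalerA.
  rewrite !ninv_cat !rep_cat !exprD mulrCA [S ^+ ninv b * _]mulrC -pull rel_ab.
  by rewrite pull [in RHS]mulrCA [S ^+ ninv a * _]mulrC.
apply: (scalemx_inj (expf_neq0 (ninv w2) s_neq0)).
by rewrite scalerC eq12 scalerC eq23 scalerC.
Qed.

Lemma rep_cat_winv c : rep (c ++ winv c) = S ^+ size c *: 1%:M.
Proof.
have := rep_beq (beq_cat_winv c); rewrite ninv_cat addnC ninv_winv_add expr0 scale1r.
by move=> ->.
Qed.

Lemma trace_rep_conj z y c : beq z (winv c ++ y ++ c) ->
  S ^+ ninv y * \tr (rep z) = S ^+ ninv z * \tr (rep y).
Proof.
move/rep_beq/(congr1 mxtrace); rewrite !mxtraceZ !rep_cat mxtrace_mulC -mulmxA -rep_cat.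
rewrite rep_cat_winv -scalemxAr mulmx1 mxtraceZ !ninv_cat addnCA ninv_winv_add exprD.
by rewrite -mulrA !(mulrCA _ (S ^+ size c)) => /(mulfI (expf_neq0 _ s_neq0)).
Qed.

Lemma rep_positive y : positive y -> exists B, rep y = S ^+ ninv y *: B.
Proof.
case=> u [pos_u /rep_beq]; rewrite ninv_all_snd // expr0 scale1r => ->.
by exists (rep u).
Qed.

End ScaledRepresentation.

(** * Lawrence-Krammer matrices *)

(* The Lawrence-Krammer matrices of B_5 at q = -1 and at q = 2, with t = 'X: [(i, true)] gives
   sigma_(i+1) and [(i, false)] gives q^2 t times its inverse. *)
Definition lk_minus_one (l : nat * bool) : cmx :=
  match l with
  | (0, true) =>
     ([:: [:: [:: 0; 1]; [:: 0; 2]; [:: 0; 2]; [:: 0; 2]; [::]; [::]; [::]; [::]; [::]; [::]];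
      [:: [::]; [::]; [::]; [::]; [:: 1]; [::]; [::]; [::]; [::]; [::]];
      [:: [::]; [::]; [::]; [::]; [::]; [:: 1]; [::]; [::]; [::]; [::]];
      [:: [::]; [::]; [::]; [::]; [::]; [::]; [:: 1]; [::]; [::]; [::]];
      [:: [::]; [:: -1]; [::]; [::]; [:: 2]; [::]; [::]; [::]; [::]; [::]];
      [:: [::]; [::]; [:: -1]; [::]; [::]; [:: 2]; [::]; [::]; [::]; [::]];
      [:: [::]; [::]; [::]; [:: -1]; [::]; [::]; [:: 2]; [::]; [::]; [::]];
      [:: [::]; [::]; [::]; [::]; [::]; [::]; [::]; [:: 1]; [::]; [::]];
      [:: [::]; [::]; [::]; [::]; [::]; [::]; [::]; [::]; [:: 1]; [::]];
      [:: [::]; [::]; [::]; [::]; [::]; [::]; [::]; [::]; [::]; [:: 1]]])%Z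
  | (0, false) =>
     ([:: [:: [:: 1]; [:: 0; -4]; [:: 0; -4]; [:: 0; -4]; [:: 0; 2]; [:: 0; 2]; [:: 0; 2]; [::]; [::]; [::]];
      [:: [::]; [:: 0; 2]; [::]; [::]; [:: 0; -1]; [::]; [::]; [::]; [::]; [::]];
      [:: [::]; [::]; [:: 0; 2]; [::]; [::]; [:: 0; -1]; [::]; [::]; [::]; [::]];
      [:: [::]; [::]; [::]; [:: 0; 2]; [::]; [::]; [:: 0; -1]; [::]; [::]; [::]];
      [:: [::]; [:: 0; 1]; [::]; [::]; [::]; [::]; [::]; [::]; [::]; [::]];
      [:: [::]; [::]; [:: 0; 1]; [::]; [::]; [::]; [::]; [::]; [::]; [::]];
      [:: [::]; [::]; [::]; [:: 0; 1]; [::]; [::]; [::]; [::]; [::]; [::]];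
      [:: [::]; [::]; [::]; [::]; [::]; [::]; [::]; [:: 0; 1]; [::]; [::]];
      [:: [::]; [::]; [::]; [::]; [::]; [::]; [::]; [::]; [:: 0; 1]; [::]];
      [:: [::]; [::]; [::]; [::]; [::]; [::]; [::]; [::]; [::]; [:: 0; 1]]])%Z
  | (1, true) =>
     ([:: [:: [:: 2]; [:: 1]; [::]; [::]; [::]; [::]; [::]; [::]; [::]; [::]];
      [:: [:: -1]; [::]; [::]; [::]; [::]; [::]; [::]; [::]; [::]; [::]];
      [:: [::]; [::]; [:: 1]; [::]; [::]; [::]; [::]; [::]; [::]; [::]];
      [:: [::]; [::]; [::]; [:: 1]; [::]; [::]; [::]; [::]; [::]; [::]];
      [:: [::]; [:: 0; -2]; [:: 0; -4]; [:: 0; -4]; [:: 0; 1]; [:: 0; 2]; [:: 0; 2]; [::]; [::]; [::]];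
      [:: [::]; [::]; [::]; [::]; [::]; [::]; [::]; [:: 1]; [::]; [::]];
      [:: [::]; [::]; [::]; [::]; [::]; [::]; [::]; [::]; [:: 1]; [::]];
      [:: [::]; [::]; [::]; [::]; [::]; [:: -1]; [::]; [:: 2]; [::]; [::]];
      [:: [::]; [::]; [::]; [::]; [::]; [::]; [:: -1]; [::]; [:: 2]; [::]];
      [:: [::]; [::]; [::]; [::]; [::]; [::]; [::]; [::]; [::]; [:: 1]]])%Z
  | (1, false) =>
     ([:: [:: [::]; [:: 0; -1]; [::]; [::]; [::]; [::]; [::]; [::]; [::]; [::]];
      [:: [:: 0; 1]; [:: 0; 2]; [::]; [::]; [::]; [::]; [::]; [::]; [::]; [::]];
      [:: [::]; [::]; [:: 0; 1]; [::]; [::]; [::]; [::]; [::]; [::]; [::]];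
      [:: [::]; [::]; [::]; [:: 0; 1]; [::]; [::]; [::]; [::]; [::]; [::]];
      [:: [:: 0; 2]; [:: 0; 4]; [:: 0; 4]; [:: 0; 4]; [:: 1]; [:: 0; -4]; [:: 0; -4]; [:: 0; 2]; [:: 0; 2]; [::]];
      [:: [::]; [::]; [::]; [::]; [::]; [:: 0; 2]; [::]; [:: 0; -1]; [::]; [::]];
      [:: [::]; [::]; [::]; [::]; [::]; [::]; [:: 0; 2]; [::]; [:: 0; -1]; [::]];
      [:: [::]; [::]; [::]; [::]; [::]; [:: 0; 1]; [::]; [::]; [::]; [::]];
      [:: [::]; [::]; [::]; [::]; [::]; [::]; [:: 0; 1]; [::]; [::]; [::]];
      [:: [::]; [::]; [::]; [::]; [::]; [::]; [::]; [::]; [::]; [:: 0; 1]]])%Z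
  | (2, true) =>
     ([:: [:: [:: 1]; [::]; [::]; [::]; [::]; [::]; [::]; [::]; [::]; [::]];
      [:: [::]; [:: 2]; [:: 1]; [::]; [::]; [::]; [::]; [::]; [::]; [::]];
      [:: [::]; [:: -1]; [::]; [::]; [::]; [::]; [::]; [::]; [::]; [::]];
      [:: [::]; [::]; [::]; [:: 1]; [::]; [::]; [::]; [::]; [::]; [::]];
      [:: [::]; [::]; [::]; [::]; [:: 2]; [:: 1]; [::]; [::]; [::]; [::]];
      [:: [::]; [::]; [::]; [::]; [:: -1]; [::]; [::]; [::]; [::]; [::]];
      [:: [::]; [::]; [::]; [::]; [::]; [::]; [:: 1]; [::]; [::]; [::]];
      [:: [::]; [::]; [:: 0; 2]; [:: 0; 4]; [::]; [:: 0; -2]; [:: 0; -4]; [:: 0; 1]; [:: 0; 2]; [::]];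
      [:: [::]; [::]; [::]; [::]; [::]; [::]; [::]; [::]; [::]; [:: 1]];
      [:: [::]; [::]; [::]; [::]; [::]; [::]; [::]; [::]; [:: -1]; [:: 2]]])%Z
  | (2, false) =>
     ([:: [:: [:: 0; 1]; [::]; [::]; [::]; [::]; [::]; [::]; [::]; [::]; [::]];
      [:: [::]; [::]; [:: 0; -1]; [::]; [::]; [::]; [::]; [::]; [::]; [::]];
      [:: [::]; [:: 0; 1]; [:: 0; 2]; [::]; [::]; [::]; [::]; [::]; [::]; [::]];
      [:: [::]; [::]; [::]; [:: 0; 1]; [::]; [::]; [::]; [::]; [::]; [::]];
      [:: [::]; [::]; [::]; [::]; [::]; [:: 0; -1]; [::]; [::]; [::]; [::]];
      [:: [::]; [::]; [::]; [::]; [:: 0; 1]; [:: 0; 2]; [::]; [::]; [::]; [::]];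
      [:: [::]; [::]; [::]; [::]; [::]; [::]; [:: 0; 1]; [::]; [::]; [::]];
      [:: [::]; [:: 0; -2]; [:: 0; -4]; [:: 0; -4]; [:: 0; 2]; [:: 0; 4]; [:: 0; 4]; [:: 1]; [:: 0; -4]; [:: 0; 2]];
      [:: [::]; [::]; [::]; [::]; [::]; [::]; [::]; [::]; [:: 0; 2]; [:: 0; -1]];
      [:: [::]; [::]; [::]; [::]; [::]; [::]; [::]; [::]; [:: 0; 1]; [::]]])%Z
  | (3, true) =>
     ([:: [:: [:: 1]; [::]; [::]; [::]; [::]; [::]; [::]; [::]; [::]; [::]];
      [:: [::]; [:: 1]; [::]; [::]; [::]; [::]; [::]; [::]; [::]; [::]];
      [:: [::]; [::]; [:: 2]; [:: 1]; [::]; [::]; [::]; [::]; [::]; [::]];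
      [:: [::]; [::]; [:: -1]; [::]; [::]; [::]; [::]; [::]; [::]; [::]];
      [:: [::]; [::]; [::]; [::]; [:: 1]; [::]; [::]; [::]; [::]; [::]];
      [:: [::]; [::]; [::]; [::]; [::]; [:: 2]; [:: 1]; [::]; [::]; [::]];
      [:: [::]; [::]; [::]; [::]; [::]; [:: -1]; [::]; [::]; [::]; [::]];
      [:: [::]; [::]; [::]; [::]; [::]; [::]; [::]; [:: 2]; [:: 1]; [::]];
      [:: [::]; [::]; [::]; [::]; [::]; [::]; [::]; [:: -1]; [::]; [::]];
      [:: [::]; [::]; [::]; [:: 0; -2]; [::]; [::]; [:: 0; 2]; [::]; [:: 0; -2]; [:: 0; 1]]])%Z
  | (3, false) =>
     ([:: [:: [:: 0; 1]; [::]; [::]; [::]; [::]; [::]; [::]; [::]; [::]; [::]];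
      [:: [::]; [:: 0; 1]; [::]; [::]; [::]; [::]; [::]; [::]; [::]; [::]];
      [:: [::]; [::]; [::]; [:: 0; -1]; [::]; [::]; [::]; [::]; [::]; [::]];
      [:: [::]; [::]; [:: 0; 1]; [:: 0; 2]; [::]; [::]; [::]; [::]; [::]; [::]];
      [:: [::]; [::]; [::]; [::]; [:: 0; 1]; [::]; [::]; [::]; [::]; [::]];
      [:: [::]; [::]; [::]; [::]; [::]; [::]; [:: 0; -1]; [::]; [::]; [::]];
      [:: [::]; [::]; [::]; [::]; [::]; [:: 0; 1]; [:: 0; 2]; [::]; [::]; [::]];
      [:: [::]; [::]; [::]; [::]; [::]; [::]; [::]; [::]; [:: 0; -1]; [::]];
      [:: [::]; [::]; [::]; [::]; [::]; [::]; [::]; [:: 0; 1]; [:: 0; 2]; [::]];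
      [:: [::]; [::]; [:: 0; 2]; [:: 0; 4]; [::]; [:: 0; -2]; [:: 0; -4]; [:: 0; 2]; [:: 0; 4]; [:: 1]]])%Z
  | _ => cmx_scalar [:: 1%Z]
  end.

Definition lk_two (l : nat * bool) : cmx :=
  match l with
  | (0, true) =>
     ([:: [:: [:: 0; 4]; [:: 0; 2]; [:: 0; 2]; [:: 0; 2]; [::]; [::]; [::]; [::]; [::]; [::]];
      [:: [::]; [::]; [::]; [::]; [:: 1]; [::]; [::]; [::]; [::]; [::]];
      [:: [::]; [::]; [::]; [::]; [::]; [:: 1]; [::]; [::]; [::]; [::]];
      [:: [::]; [::]; [::]; [::]; [::]; [::]; [:: 1]; [::]; [::]; [::]];
      [:: [::]; [:: 2]; [::]; [::]; [:: -1]; [::]; [::]; [::]; [::]; [::]];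
      [:: [::]; [::]; [:: 2]; [::]; [::]; [:: -1]; [::]; [::]; [::]; [::]];
      [:: [::]; [::]; [::]; [:: 2]; [::]; [::]; [:: -1]; [::]; [::]; [::]];
      [:: [::]; [::]; [::]; [::]; [::]; [::]; [::]; [:: 1]; [::]; [::]];
      [:: [::]; [::]; [::]; [::]; [::]; [::]; [::]; [::]; [:: 1]; [::]];
      [:: [::]; [::]; [::]; [::]; [::]; [::]; [::]; [::]; [::]; [:: 1]]])%Z
  | (0, false) =>
     ([:: [:: [:: 1]; [:: 0; -1]; [:: 0; -1]; [:: 0; -1]; [:: 0; -1]; [:: 0; -1]; [:: 0; -1]; [::]; [::]; [::]];
      [:: [::]; [:: 0; 2]; [::]; [::]; [:: 0; 2]; [::]; [::]; [::]; [::]; [::]];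
      [:: [::]; [::]; [:: 0; 2]; [::]; [::]; [:: 0; 2]; [::]; [::]; [::]; [::]];
      [:: [::]; [::]; [::]; [:: 0; 2]; [::]; [::]; [:: 0; 2]; [::]; [::]; [::]];
      [:: [::]; [:: 0; 4]; [::]; [::]; [::]; [::]; [::]; [::]; [::]; [::]];
      [:: [::]; [::]; [:: 0; 4]; [::]; [::]; [::]; [::]; [::]; [::]; [::]];
      [:: [::]; [::]; [::]; [:: 0; 4]; [::]; [::]; [::]; [::]; [::]; [::]];
      [:: [::]; [::]; [::]; [::]; [::]; [::]; [::]; [:: 0; 4]; [::]; [::]];
      [:: [::]; [::]; [::]; [::]; [::]; [::]; [::]; [::]; [:: 0; 4]; [::]];
      [:: [::]; [::]; [::]; [::]; [::]; [::]; [::]; [::]; [::]; [:: 0; 4]]])%Z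
  | (1, true) =>
     ([:: [:: [:: -1]; [:: 1]; [::]; [::]; [::]; [::]; [::]; [::]; [::]; [::]];
      [:: [:: 2]; [::]; [::]; [::]; [::]; [::]; [::]; [::]; [::]; [::]];
      [:: [::]; [::]; [:: 1]; [::]; [::]; [::]; [::]; [::]; [::]; [::]];
      [:: [::]; [::]; [::]; [:: 1]; [::]; [::]; [::]; [::]; [::]; [::]];
      [:: [::]; [:: 0; 4]; [:: 0; 2]; [:: 0; 2]; [:: 0; 4]; [:: 0; 2]; [:: 0; 2]; [::]; [::]; [::]];
      [:: [::]; [::]; [::]; [::]; [::]; [::]; [::]; [:: 1]; [::]; [::]];
      [:: [::]; [::]; [::]; [::]; [::]; [::]; [::]; [::]; [:: 1]; [::]];
      [:: [::]; [::]; [::]; [::]; [::]; [:: 2]; [::]; [:: -1]; [::]; [::]];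
      [:: [::]; [::]; [::]; [::]; [::]; [::]; [:: 2]; [::]; [:: -1]; [::]];
      [:: [::]; [::]; [::]; [::]; [::]; [::]; [::]; [::]; [::]; [:: 1]]])%Z
  | (1, false) =>
     ([:: [:: [::]; [:: 0; 2]; [::]; [::]; [::]; [::]; [::]; [::]; [::]; [::]];
      [:: [:: 0; 4]; [:: 0; 2]; [::]; [::]; [::]; [::]; [::]; [::]; [::]; [::]];
      [:: [::]; [::]; [:: 0; 4]; [::]; [::]; [::]; [::]; [::]; [::]; [::]];
      [:: [::]; [::]; [::]; [:: 0; 4]; [::]; [::]; [::]; [::]; [::]; [::]];
      [:: [:: 0; -4]; [:: 0; -2]; [:: 0; -2]; [:: 0; -2]; [:: 1]; [:: 0; -1]; [:: 0; -1]; [:: 0; -1]; [:: 0; -1]; [::]];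
      [:: [::]; [::]; [::]; [::]; [::]; [:: 0; 2]; [::]; [:: 0; 2]; [::]; [::]];
      [:: [::]; [::]; [::]; [::]; [::]; [::]; [:: 0; 2]; [::]; [:: 0; 2]; [::]];
      [:: [::]; [::]; [::]; [::]; [::]; [:: 0; 4]; [::]; [::]; [::]; [::]];
      [:: [::]; [::]; [::]; [::]; [::]; [::]; [:: 0; 4]; [::]; [::]; [::]];
      [:: [::]; [::]; [::]; [::]; [::]; [::]; [::]; [::]; [::]; [:: 0; 4]]])%Z
  | (2, true) =>
     ([:: [:: [:: 1]; [::]; [::]; [::]; [::]; [::]; [::]; [::]; [::]; [::]];
      [:: [::]; [:: -1]; [:: 1]; [::]; [::]; [::]; [::]; [::]; [::]; [::]];
      [:: [::]; [:: 2]; [::]; [::]; [::]; [::]; [::]; [::]; [::]; [::]];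
      [:: [::]; [::]; [::]; [:: 1]; [::]; [::]; [::]; [::]; [::]; [::]];
      [:: [::]; [::]; [::]; [::]; [:: -1]; [:: 1]; [::]; [::]; [::]; [::]];
      [:: [::]; [::]; [::]; [::]; [:: 2]; [::]; [::]; [::]; [::]; [::]];
      [:: [::]; [::]; [::]; [::]; [::]; [::]; [:: 1]; [::]; [::]; [::]];
      [:: [::]; [::]; [:: 0; 8]; [:: 0; 4]; [::]; [:: 0; 4]; [:: 0; 2]; [:: 0; 4]; [:: 0; 2]; [::]];
      [:: [::]; [::]; [::]; [::]; [::]; [::]; [::]; [::]; [::]; [:: 1]];
      [:: [::]; [::]; [::]; [::]; [::]; [::]; [::]; [::]; [:: 2]; [:: -1]]])%Z
  | (2, false) =>
     ([:: [:: [:: 0; 4]; [::]; [::]; [::]; [::]; [::]; [::]; [::]; [::]; [::]];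
      [:: [::]; [::]; [:: 0; 2]; [::]; [::]; [::]; [::]; [::]; [::]; [::]];
      [:: [::]; [:: 0; 4]; [:: 0; 2]; [::]; [::]; [::]; [::]; [::]; [::]; [::]];
      [:: [::]; [::]; [::]; [:: 0; 4]; [::]; [::]; [::]; [::]; [::]; [::]];
      [:: [::]; [::]; [::]; [::]; [::]; [:: 0; 2]; [::]; [::]; [::]; [::]];
      [:: [::]; [::]; [::]; [::]; [:: 0; 4]; [:: 0; 2]; [::]; [::]; [::]; [::]];
      [:: [::]; [::]; [::]; [::]; [::]; [::]; [:: 0; 4]; [::]; [::]; [::]];
      [:: [::]; [:: 0; -8]; [:: 0; -4]; [:: 0; -4]; [:: 0; -4]; [:: 0; -2]; [:: 0; -2]; [:: 1]; [:: 0; -1]; [:: 0; -1]];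
      [:: [::]; [::]; [::]; [::]; [::]; [::]; [::]; [::]; [:: 0; 2]; [:: 0; 2]];
      [:: [::]; [::]; [::]; [::]; [::]; [::]; [::]; [::]; [:: 0; 4]; [::]]])%Z
  | (3, true) =>
     ([:: [:: [:: 1]; [::]; [::]; [::]; [::]; [::]; [::]; [::]; [::]; [::]];
      [:: [::]; [:: 1]; [::]; [::]; [::]; [::]; [::]; [::]; [::]; [::]];
      [:: [::]; [::]; [:: -1]; [:: 1]; [::]; [::]; [::]; [::]; [::]; [::]];
      [:: [::]; [::]; [:: 2]; [::]; [::]; [::]; [::]; [::]; [::]; [::]];
      [:: [::]; [::]; [::]; [::]; [:: 1]; [::]; [::]; [::]; [::]; [::]];
      [:: [::]; [::]; [::]; [::]; [::]; [:: -1]; [:: 1]; [::]; [::]; [::]];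
      [:: [::]; [::]; [::]; [::]; [::]; [:: 2]; [::]; [::]; [::]; [::]];
      [:: [::]; [::]; [::]; [::]; [::]; [::]; [::]; [:: -1]; [:: 1]; [::]];
      [:: [::]; [::]; [::]; [::]; [::]; [::]; [::]; [:: 2]; [::]; [::]];
      [:: [::]; [::]; [::]; [:: 0; 16]; [::]; [::]; [:: 0; 8]; [::]; [:: 0; 4]; [:: 0; 4]]])%Z
  | (3, false) =>
     ([:: [:: [:: 0; 4]; [::]; [::]; [::]; [::]; [::]; [::]; [::]; [::]; [::]];
      [:: [::]; [:: 0; 4]; [::]; [::]; [::]; [::]; [::]; [::]; [::]; [::]];
      [:: [::]; [::]; [::]; [:: 0; 2]; [::]; [::]; [::]; [::]; [::]; [::]];
      [:: [::]; [::]; [:: 0; 4]; [:: 0; 2]; [::]; [::]; [::]; [::]; [::]; [::]];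
      [:: [::]; [::]; [::]; [::]; [:: 0; 4]; [::]; [::]; [::]; [::]; [::]];
      [:: [::]; [::]; [::]; [::]; [::]; [::]; [:: 0; 2]; [::]; [::]; [::]];
      [:: [::]; [::]; [::]; [::]; [::]; [:: 0; 4]; [:: 0; 2]; [::]; [::]; [::]];
      [:: [::]; [::]; [::]; [::]; [::]; [::]; [::]; [::]; [:: 0; 2]; [::]];
      [:: [::]; [::]; [::]; [::]; [::]; [::]; [::]; [:: 0; 4]; [:: 0; 2]; [::]];
      [:: [::]; [::]; [:: 0; -16]; [:: 0; -8]; [::]; [:: 0; -8]; [:: 0; -4]; [:: 0; -4]; [:: 0; -2]; [:: 1]]])%Z
  | _ => cmx_scalar [:: 1%Z]
  end.

Lemma lk_minus_one_braid : braid_relations lk_minus_one [:: 0%Z; 1%Z].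
Proof. by vm_compute. Qed.

Lemma lk_two_braid : braid_relations lk_two [:: 0%Z; 4%Z].
Proof. by vm_compute. Qed.

(** * Canonical length of conjugates *)

Local Notation LK := (rep lk_minus_one).

Lemma to_poly_Xn n : to_poly (rcons (nseq n 0%Z) 1%Z) = 'X^n.
Proof.
elim: n => [|n IH] /=; first by rewrite mulr0 addr0 polyC1.
by rewrite IH polyC0 add0r exprS.
Qed.

Lemma to_poly_X : to_poly [:: 0%Z; 1%Z] = 'X.
Proof. exact: (to_poly_Xn 1). Qed.

Lemma to_poly_X_neq0 : to_poly [:: 0%Z; 1%Z] != 0.
Proof. by rewrite to_poly_X polyX_eq0. Qed.

Lemma LK_beq w1 w2 : beq w1 w2 -> 'X ^+ ninv w2 *: LK w1 = 'X ^+ ninv w1 *: LK w2.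
Proof. by move/(rep_beq lk_minus_one_braid to_poly_X_neq0); rewrite to_poly_X. Qed.

Lemma LK_positive y : positive y -> Xdvdmx (ninv y) (LK y).
Proof. by move/(rep_positive lk_minus_one_braid to_poly_X_neq0); rewrite to_poly_X. Qed.

Definition pcode (s : seq nat) : seq (nat * bool) := [seq (i, true) | i <- s].

Lemma LK_pword s : all (fun i => i < 4)%N s ->
  LK (pword s) = to_mx (cmx_prod lk_minus_one (pcode s)).
Proof. by move=> lt4; rewrite rep_code code_pword. Qed.

Lemma LK_Delta : Xdvdmx 1 (LK Delta).
Proof. by rewrite (LK_pword (s := Delta_code)) //; apply/cmx_XdvdP; vm_compute. Qed.

Lemma LK_Delta_sqr : LK Delta *m LK Delta = 'X ^+ 2 *: 1%:M.
Proof.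
rewrite -rep_cat (LK_pword (s := Delta_code ++ Delta_code)) // scalemx1.
rewrite (@cmx_eqbP _ (cmx_scalar (rcons (nseq 2 0%Z) 1%Z))); last by vm_compute.
by rewrite to_mx_scalar to_poly_Xn.
Qed.

Lemma LK_winv_simple x : simple x -> Xdvdmx (count snd x).-1 (LK (winv x)).
Proof.
(* x^-1 Delta is positive, and Delta^2 acts by X^2. *)
case=> _ /LK_positive; rewrite ninv_cat ninv_winv ninv_all_snd // addn0 rep_cat => -[B eqB].
have [D eqD] := LK_Delta.
have : 'X ^+ 2 *: LK (winv x) = 'X ^+ (count snd x).+1 *: (B *m D).
  rewrite -[LK (winv x)]mulmx1 scalemxAr -LK_Delta_sqr mulmxA eqB eqD.
  by rewrite -scalemxAl -scalemxAr scalerA -exprSr.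
case: (count snd x) => [|n] eqX /=; first by exists (LK (winv x)); rewrite scale1r.
exists (B *m D); apply: (scalemx_inj (expf_neq0 2 (negbT (polyX_eq0 _)))).
by rewrite eqX scalerA -exprD add2n.
Qed.

Lemma LK_winv_flatten xs : {in xs, forall s, simple s} ->
  Xdvdmx (ninv (winv (flatten xs)) - size xs) (LK (winv (flatten xs))).
Proof.
elim: xs => [|s xs IH] simple_xs /=; first by exists 1%:M; rewrite scale1r.
have e_xs : Xdvdmx (ninv (winv (flatten xs)) - size xs) (LK (winv (flatten xs))).
  by apply: IH => t t_xs; apply: simple_xs; rewrite inE t_xs orbT.
rewrite winv_cat rep_cat ninv_cat (ninv_winv s).
apply: (Xdvdmx_leq _ (Xdvdmx_mul e_xs (LK_winv_simple (simple_xs s (mem_head s xs))))).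
by move: (ninv _) (size xs) (count _ _) => a r c; rewrite -subn1; lia.
Qed.

Definition inv_code (s : seq nat) : seq (nat * bool) := rev [seq (i, false) | i <- s].

Definition inv_factor (s : seq nat) (e : nat) : cmx :=
  cmx_Xdiv e (cmx_prod lk_minus_one (inv_code s)).

Lemma LK_winv_pword s : all (fun i => i < 4)%N s ->
  LK (winv (pword s)) = to_mx (cmx_prod lk_minus_one (inv_code s)).
Proof. by move=> lt4; rewrite rep_code code_winv code_pword // /inv_code -map_comp. Qed.

Definition beta_inv_core (m : nat) : 'M[{poly Z}]_10 :=
  to_mx (inv_factor [:: 3] 0) ^+ (2 * m + 1)%N *m
  (to_mx (inv_factor [:: 2; 3] 1) *m (to_mx (inv_factor [:: 1; 0; 2; 3; 2] 4) *m
   to_mx (inv_factor [:: 0; 1; 0; 3] 3) ^+ (2 * m + 4)%N)).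

Lemma LK_winv_beta m : LK (winv (beta m.+2)) = 'X^(6 * m + 17)%N *: beta_inv_core m.
Proof.
have nf := beq_beta_factors m; have pos_beta : all snd (beta m.+2).
  by rewrite /beta !all_cat !all_wpow.
have pos_nf : all snd (flatten (beta_factors m)).
  by rewrite flatten_beta_factors !all_cat !all_wpow.
have := LK_beq (beq_winv nf); rewrite !ninv_winv.
rewrite !count_all_snd // (beq_all_snd_size pos_beta pos_nf nf).
move/(scalemx_inj (expf_neq0 _ (negbT (polyX_eq0 _)))) ->.
rewrite flatten_beta_factors !winv_cat !winv_wpow !rep_cat !rep_wpow.
have Fa : LK (winv nf_a) = 'X^3 *: to_mx (inv_factor [:: 0; 1; 0; 3] 3).
  by rewrite (LK_winv_pword (s := [:: 0; 1; 0; 3])) // -to_mx_Xdiv //; vm_compute.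
have Fb : LK (winv nf_b) = 'X^4 *: to_mx (inv_factor [:: 1; 0; 2; 3; 2] 4).
  by rewrite (LK_winv_pword (s := [:: 1; 0; 2; 3; 2])) // -to_mx_Xdiv //; vm_compute.
have Fc : LK (winv nf_c) = 'X^1 *: to_mx (inv_factor [:: 2; 3] 1).
  by rewrite (LK_winv_pword (s := [:: 2; 3])) // -to_mx_Xdiv //; vm_compute.
have Fd : LK (winv nf_d) = 'X^0 *: to_mx (inv_factor [:: 3] 0).
  by rewrite (LK_winv_pword (s := [:: 3])) // -to_mx_Xdiv //; vm_compute.
rewrite Fa Fb Fc Fd /beta_inv_core !exprZn; do 3 rewrite -?scalemxAl -?scalemxAr.
by rewrite !scalerA !mulmxA -!exprM -!exprD; congr (_ *: _); congr (_ ^+ _); lia.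
Qed.

Lemma coef0_trace_beta_inv_core m : (\tr (beta_inv_core m))`_0 = 2%Z.
Proof.
have id_red : forall z : Z, idfun (id z) = idfun z by [].
have ev0_id (p : {poly Z}) : (idfun \o horner_eval 0) p = p`_0.
  by rewrite /= horner_evalE horner_coef0.
set a := inv_factor [:: 0; 1; 0; 3] 3; set b := inv_factor [:: 1; 0; 2; 3; 2] 4.
set c := inv_factor [:: 2; 3] 1; set d := inv_factor [:: 3] 0.
have -> : beta_inv_core m =
    to_mx d ^+ (2 * m + 1)%N *m (to_mx c *m (to_mx b *m to_mx (cmx_mul a a) ^+ (m + 2)%N)).
  by rewrite /beta_inv_core to_mx_mul (_ : (2 * m + 4 = 2 * (m + 2))%N) ?exprM ?expr2 //; lia.
have stable_d := map_to_mx_pow_stable id_red (A := d) (m := 1) (k := (2 * m + 1)%N).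
have stable_a := map_to_mx_pow_stable id_red (A := cmx_mul a a) (m := 1) (k := (m + 2)%N).
rewrite -ev0_id -trace_map_mx !map_mxM.
rewrite stable_d; [| by vm_compute | by rewrite addn1].
rewrite stable_a; [| by vm_compute | by rewrite addn2].
rewrite -!map_mxM.
set d1 := cmx_pow_red id d 1; set a2 := cmx_pow_red id (cmx_mul a a) 1.
have -> : to_mx d1 *m (to_mx c *m (to_mx b *m to_mx a2)) =
          to_mx (cmx_mul d1 (cmx_mul c (cmx_mul b a2))) by rewrite !to_mx_mul.
by rewrite trace_map_to_mx; vm_compute.
Qed.

Lemma coefXn_mul_leq n d (p q : {poly Z}) : 'X^n * p = 'X^d * q -> q`_0 != 0 -> (n <= d)%N.
Proof.
move=> eq_pq; apply: contraR; rewrite -ltnNge => lt_dn.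
by have := congr1 (coefp d) eq_pq; rewrite /= !coefXnM lt_dn ltnn subnn => <-.
Qed.

Lemma ninv_winv_Delta_pow p : (p <= 0)%R -> ninv (winv (Delta_pow p)) = 0%N.
Proof.
case: p => [[|n]|n] //= _; rewrite winv_wpow winvK ninv_all_snd //.
exact: all_wpow.
Qed.

Lemma size_beta k : (1 <= k)%N -> size (beta k) = (10 * k + 4)%N.
Proof.
have size_sigma i : size (sigma i) = 1%N by [].
by rewrite /beta !size_cat !size_wpow !size_sigma (_ : size delta3 = 2%N) //; lia.
Qed.

Lemma canonical_length_lower_bound m c z p xs :
  beq z (winv c ++ beta m.+2 ++ c) -> left_normal_form z p xs -> (p <= 0)%R ->
  (4 * m + 7 <= size xs)%N.
Proof.
move=> conj_z [nf_z factors_xs _] p_le0.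
have simple_xs : {in xs, forall s, simple s} by move=> s /factors_xs [].
have pos_beta : all snd (beta m.+2) by rewrite /beta !all_cat !all_wpow.
set W := winv (Delta_pow p ++ flatten xs).
have conj_W : beq W (winv c ++ winv (beta m.+2) ++ c).
  apply: beq_trans (beq_winv (beq_sym nf_z)) _.
  by have := beq_winv conj_z; rewrite !winv_cat winvK -catA.
have := trace_rep_conj lk_minus_one_braid to_poly_X_neq0 conj_W.
rewrite to_poly_X ninv_winv count_all_snd // size_beta // LK_winv_beta mxtraceZ.
rewrite /W winv_cat rep_cat ninv_cat ninv_winv_Delta_pow // addn0.
have [E ->] := LK_winv_flatten simple_xs.
rewrite -scalemxAl mxtraceZ !mulrA -!exprD => /coefXn_mul_leq.
rewrite coef0_trace_beta_inv_core => /(_ isT).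
by move: (ninv _) (size xs) => a r; lia.
Qed.

(** * Infimum of conjugates *)

Local Notation LK2 := (rep lk_two).
Local Notation to_Z8 := (@intmul 'Z_8 1 \o int_of_Z).

Definition red8 (z : Z) : Z := Z.modulo z 8.

Lemma to_Z8_red8 z : to_Z8 (red8 z) = to_Z8 z.
Proof.
rewrite {2}(Z.div_mod z 8) //.
have -> : (8 * (z / 8) + z mod 8)%Z = (8%Z * (z / 8)%Z + red8 z)%R by [].
rewrite rmorphD rmorphM /=.
have -> : ((int_of_Z 8%Z)%:~R : 'Z_8) = 0 by apply/eqP; vm_compute.
by rewrite mul0r add0r.
Qed.

Lemma LK2_Delta_mod8 : map_mx (to_Z8 \o horner_eval 0) (LK2 Delta) = 0.
Proof.
rewrite rep_code (code_pword (s := Delta_code)) //.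
rewrite (map_to_mx_eq to_Z8_red8 (B := cmx_of (fun _ _ => [::]))); last by vm_compute.
by apply/matrixP => i j; rewrite !mxE cmx_ent_of rmorph0.
Qed.

Lemma LK2_trace_beta_mod8 k : (2 <= k)%N -> (to_Z8 \o horner_eval 0) (\tr (LK2 (beta k))) != 0.
Proof.
move=> k_ge2.
have -> : beta k = wpow (pword [:: 1; 0]) (3 * k + 1) ++ wpow (pword [:: 3]) (2 * k + 2) ++
                   pword [:: 2] ++ wpow (pword [:: 3]) (2 * k - 1) by [].
rewrite !rep_cat !rep_wpow !rep_code !code_pword // -trace_map_mx !map_mxM.
set d := cmx_prod lk_two [seq (i, true) | i <- [:: 1; 0]].
set s4 := cmx_prod lk_two [seq (i, true) | i <- [:: 3]].
set s3 := cmx_prod lk_two [seq (i, true) | i <- [:: 2]].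
rewrite (map_to_mx_pow_stable to_Z8_red8 (A := d) (m := 3)); [| by vm_compute | lia].
rewrite !(map_to_mx_pow_stable to_Z8_red8 (A := s4) (m := 3));
  [| by vm_compute | lia | by vm_compute | lia].
rewrite -!map_mxM.
have -> : to_mx (cmx_pow_red red8 d 3) *m (to_mx (cmx_pow_red red8 s4 3) *m
            (to_mx s3 *m to_mx (cmx_pow_red red8 s4 3))) =
          to_mx (cmx_mul (cmx_pow_red red8 d 3) (cmx_mul (cmx_pow_red red8 s4 3)
            (cmx_mul s3 (cmx_pow_red red8 s4 3)))) by rewrite !to_mx_mul.
by rewrite trace_map_to_mx; vm_compute.
Qed.

Lemma to_poly_4X_neq0 : to_poly [:: 0%Z; 4%Z] != 0.
Proof. by apply/eqP => /(congr1 (fun q : {poly Z} => q`_1)); rewrite coef_to_poly coef0. Qed.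

Lemma inf_conjugate_nonpos k c z p xs : (2 <= k)%N ->
  beq z (winv c ++ beta k ++ c) -> left_normal_form z p xs -> (p <= 0)%R.
Proof.
move=> k_ge2 conj_z [nf_z factors_xs _]; case: p nf_z => [[|n]|n] nf_z //; exfalso.
have [U [pos_U eq_U]] : positive (flatten xs).
  by apply: positive_flatten => s /factors_xs [[]].
set Y := Delta ++ wpow Delta n ++ U.
have conj_Y : beq Y (winv c ++ beta k ++ c).
  apply: beq_trans conj_z; apply/beq_sym/(beq_trans nf_z).
  by rewrite /Delta_pow wpowS -catA; do 2 apply: beq_catl.
have pos_Y : all snd Y by rewrite /Y !all_cat pos_U all_wpow.
have pos_beta : all snd (beta k) by rewrite /beta !all_cat !all_wpow.
have := trace_rep_conj lk_two_braid to_poly_4X_neq0 conj_Y.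
rewrite !ninv_all_snd // !expr0 !mul1r => /(congr1 (to_Z8 \o horner_eval 0)).
rewrite -trace_map_mx /Y rep_cat map_mxM LK2_Delta_mod8 mul0mx mxtrace0 => /esym/eqP.
by rewrite (negbTE (LK2_trace_beta_mod8 k_ge2)).
Qed.

(** * The left normal form of beta *)

(* For every generator sigma_(i+1): either the matrix of (s1 sigma_(i+1))^-1 is not divisible by
   X^(size s1), so s1 sigma_(i+1) is not simple, or the matrix of sigma_(i+1)^-1 s2 is not
   divisible by X, so sigma_(i+1)^-1 s2 is not positive. *)
Definition left_weighted_check (s1 s2 : seq nat) : bool :=
  all (fun i => ~~ cmx_Xdvd (size s1) (cmx_prod lk_minus_one (inv_code (rcons s1 i))) ||
                ~~ cmx_Xdvd 1 (cmx_prod lk_minus_one ((i, false) :: pcode s2))) (iota 0 4).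

Lemma left_weighted_pword s1 s2 : all (fun i => i < 4)%N s1 -> all (fun i => i < 4)%N s2 ->
  left_weighted_check s1 s2 -> left_weighted (pword s1) (pword s2).
Proof.
move=> lt1 lt2 /allP check [i [simple1 [pos2 _]]].
have lt_i : (i < 4)%N by [].
have := check i; rewrite mem_iota add0n lt_i => /(_ isT) /orP[] /negP; apply.
- have eq_rcons : pword s1 ++ [:: (i, true)] = pword (rcons s1 i).
    by rewrite -cats1 pword_cat /= inord_val.
  move: simple1; rewrite eq_rcons => /LK_winv_simple.
  rewrite LK_winv_pword ?all_rcons ?lt_i // => /cmx_XdvdP.
  by rewrite count_all_snd ?all_snd_pword // size_map size_rcons.
- move: pos2 => /LK_positive; rewrite ninv_cat (ninv_all_snd (all_snd_pword s2)).
  by rewrite rep_code map_cat code_pword // => /cmx_XdvdP.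
Qed.

Lemma proper_simple_pword n s : size s != 0%N -> size s != 10%N ->
  has (prefix s) (explore n [:: Delta_code] [:: Delta_code]) ->
  [/\ simple (pword s), ~ beq (pword s) [::] & ~ beq (pword s) Delta].
Proof.
move=> s_neq0 s_neq10 /simple_pword simple_s; split=> // /(beq_all_snd_size (all_snd_pword s)).
  by rewrite size_map => /(_ isT) /eqP; apply/negP.
by rewrite size_map => /(_ isT) /eqP; apply/negP.
Qed.

Lemma proper_simple_beta_factor s : s \in [:: nf_a; nf_b; nf_c; nf_d] ->
  [/\ simple s, ~ beq s [::] & ~ beq s Delta].
Proof.
rewrite !inE => /or4P[] /eqP ->.
- by apply: (@proper_simple_pword 20 [:: 0; 1; 0; 3]); vm_compute.
- by apply: (@proper_simple_pword 20 [:: 1; 0; 2; 3; 2]); vm_compute.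
- by apply: (@proper_simple_pword 20 [:: 2; 3]); vm_compute.
- by apply: (@proper_simple_pword 20 [:: 3]); vm_compute.
Qed.

Definition beta_factor_pairs : seq (word * word) :=
  [:: (nf_a, nf_a); (nf_a, nf_b); (nf_b, nf_c); (nf_c, nf_d); (nf_d, nf_d)].

Lemma left_weighted_beta_factor_pair x y : (x, y) \in beta_factor_pairs -> left_weighted x y.
Proof.
rewrite !inE => /orP[|/or4P[]] /eqP [-> ->].
- by apply: (@left_weighted_pword [:: 0; 1; 0; 3] [:: 0; 1; 0; 3]); vm_compute.
- by apply: (@left_weighted_pword [:: 0; 1; 0; 3] [:: 1; 0; 2; 3; 2]); vm_compute.
- by apply: (@left_weighted_pword [:: 1; 0; 2; 3; 2] [:: 2; 3]); vm_compute.
- by apply: (@left_weighted_pword [:: 2; 3] [:: 3]); vm_compute.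
- by apply: (@left_weighted_pword [:: 3] [:: 3]); vm_compute.
Qed.

Lemma path_nseq (T : Type) (R : rel T) x y n : R x y -> R y y -> path R x (nseq n y).
Proof. by move=> Rxy Ryy; elim: n x Rxy => [|n IH] x Rxy //=; rewrite Rxy IH. Qed.

Lemma left_normal_form_beta m : left_normal_form (beta m.+2) 0 (beta_factors m).
Proof.
split; first exact: beq_beta_factors.
  by move=> s; rewrite /beta_factors !mem_cat !inE => /or3P[/nseqP[-> _]|/orP[]/eqP->|/nseqP[-> _]];
    apply: proper_simple_beta_factor; rewrite !inE eqxx ?orbT.
have chain : path (fun x y => (x, y) \in beta_factor_pairs) nf_a
    (nseq (2 * m + 3)%N nf_a ++ [:: nf_b, nf_c & nseq (2 * m + 1)%N nf_d]).
  have last_a : last nf_a (nseq (2 * m + 3)%N nf_a) = nf_a by elim: (2 * m + 3)%N.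
  by rewrite cat_path last_a /= !path_nseq ?inE ?eqxx ?orbT.
have -> : beta_factors m =
    nf_a :: nseq (2 * m + 3)%N nf_a ++ [:: nf_b, nf_c & nseq (2 * m + 1)%N nf_d].
  by rewrite /beta_factors (_ : (2 * m + 4 = (2 * m + 3).+1)%N) //; lia.
move=> i; rewrite ltnS => /(pathP [::] chain).
by move/left_weighted_beta_factor_pair.
Qed.

Theorem mainTheorem3 (k : nat) : (2 <= k)%N -> in_super_summit_set (beta k) (beta k).
Proof.
case: k => [|[|m]] // k_ge2; split; first by exists [::]; rewrite /= cats0; exact: beq_refl.
exists (4 * m + 7)%N; split.
  exists 0%R, (beta_factors m); split; first exact: left_normal_form_beta.
  by rewrite /beta_factors !size_cat !size_nseq /=; lia.
move=> z r [c conj_z] [p [xs [nf_z <-]]].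
exact: canonical_length_lower_bound conj_z nf_z (inf_conjugate_nonpos k_ge2 conj_z nf_z).
Qed.
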